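(* For every $n$ there exists a bipartite graph $G$ with $O(n)$ vertices and $O(n)$ edges such that the induced matching polytope of $G$ has extension complexity $2^{\Omega(\sqrt[4]{n})}$.
   Context: A matching in a graph $G=(V,E)$ is a set of pairwise vertex-disjoint edges; it is induced if no edge of $G$ joins two distinct edges of the matching. The induced matching polytope of $G$ is the convex hull of the 0/1 incidence vectors in $\mathbb{R}^E$ of all induced matchings of $G$. The extension complexity $\mathrm{xc}(Q)$ of a polytope $Q$ is the minimum number of facets of a polytope $Q'$ such that $Q$ is a linear image of $Q'$. *)

From HB Require Import structures.
From mathcomp Require Import all_boot all_order all_algebra.
Set Implicit Arguments. Unset Strict Implicit. Unset Printing Implicit Defensive.
Import Order.TTheory GRing.Theory Num.Theory.
Local Open Scope ring_scope.

(* A simple graph on vertex set V is a symmetric irreflexive relation e. *)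
Definition edge_of (V : finType) (e : rel V) (A : {set V}) : bool :=
  [exists x, exists y, e x y && (A == [set x; y])].

Definition edge_t (V : finType) (e : rel V) := {A : {set V} | edge_of e A}.

Definition bipartite (V : finType) (e : rel V) : Prop :=
  exists f : V -> bool, forall x y, e x y -> f x != f y.

Definition induced_matching (V : finType) (e : rel V) (M : {set edge_t e}) : bool :=
  [forall a in M, forall b in M, (a != b) ==>
     ([disjoint val a & val b] &&
      [forall x in val a, forall y in val b, ~~ e x y])].

Section Geometry.
Variable R : realFieldType.

Definition lin (D : finType) (a x : D -> R) : R := \sum_d a d * x d.

Definition in_conv (D I : finType) (P : pred I) (v : I -> D -> R) (x : D -> R) : Prop :=
  exists w : I -> R,
    [/\ forall i, 0 <= w i, forall i, ~~ P i -> w i = 0,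
        \sum_i w i = 1 & forall d, x d = \sum_i w i * v i d].

Definition aff_indep (D : finType) (m : nat) (p : 'I_m -> D -> R) : Prop :=
  forall lam : 'I_m -> R, \sum_i lam i = 0 ->
    (forall d, \sum_i lam i * p i d = 0) -> forall i, lam i = 0.

Definition has_aff_indep (D : finType) (S : (D -> R) -> Prop) (m : nat) : Prop :=
  exists p : 'I_m -> D -> R, (forall i, S (p i)) /\ aff_indep p.

(* affrank S r : the maximal number of affinely independent points of S is r,
   i.e. dim (aff hull S) = r - 1 (with dim of the empty set = -1). *)
Definition affrank (D : finType) (S : (D -> R) -> Prop) (r : nat) : Prop :=
  has_aff_indep S r /\ ~ has_aff_indep S r.+1.

Definition is_face (D : finType) (P F : (D -> R) -> Prop) : Prop :=
  exists (a : D -> R) (b : R),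
    (forall x, P x -> lin a x <= b) /\ (forall x, F x <-> (P x /\ lin a x = b)).

Definition is_facet (D : finType) (P F : (D -> R) -> Prop) : Prop :=
  is_face P F /\ exists r, affrank P r.+1 /\ affrank F r.

(* xc_ge Q N : the extension complexity of Q is at least N, i.e. every
   polytope Q' (convex hull of finitely many points in some R^k) having Q as
   a linear image has at least N facets (every list of sets containing all
   facets of Q' has length >= N). *)
Definition xc_ge (D : finType) (Q : (D -> R) -> Prop) (N : nat) : Prop :=
  forall (k m : nat) (p : 'I_m -> 'I_k -> R) (c : D -> 'I_k -> R)
         (L : seq (('I_k -> R) -> Prop)),
    (forall x, Q x <-> exists y, in_conv predT p y /\
                                 forall d, x d = \sum_j c d j * y j) ->
    (forall F, is_facet (in_conv predT p) F ->
       exists i, (i < size L)%N /\ forall y, F y <-> nth (fun _ => False) L i y) ->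
    (N <= size L)%N.

Definition induced_matching_polytope (V : finType) (e : rel V) :
    (edge_t e -> R) -> Prop :=
  in_conv (induced_matching (e := e))
          (fun (M : {set edge_t e}) (eps : edge_t e) => if eps \in M then 1 else 0).

End Geometry.

From HB Require Import structures.
From mathcomp Require Import all_boot all_order all_algebra zify ring.
Import Order.TTheory GRing.Theory Num.Theory.

Set Implicit Arguments. Unset Strict Implicit. Unset Printing Implicit Defensive.

(* Subsets [a] of the variables ['I_m] are truth assignments. The graph has one
   edge for each literal [i |-> u, j |-> v], and conflicting literals are joined
   crosswise, so every assignment [a] yields an induced matching of compatible
   literals. For each [b] there is a valid inequality whose slack at the
   matching of [a] is [(|a :&: b| - 1)^2]: the unique-disjointness matrix.
   Given an extension, every disjoint pair [(a, b)] is witnessed by a facet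
   containing the tight face of [b] but not the lift of [a]; grouping disjoint
   pairs by their facet yields rectangles avoiding [|a :&: b| = 1], each of
   which holds at most [2^m] of the [3^m] disjoint pairs. Hence there are at
   least [(3/2)^m] facets. With [m = 2K] and [1024 K^4 <= n] the graph has
   [32 K^2] vertices and at most [n] edges, and [(9/4)^K >= 2^k]. *)

(** * Counting disjoint pairs *)

Section DisjointPairs.
Variable T : finType.
Implicit Types (x : T) (a b S : {set T}) (A B : pred {set T}).

Lemma big_setU1_split (R : Type) (idx : R) (op : Monoid.com_law idx) x
    (F : {set T} -> R) :
  \big[op/idx]_(a : {set T}) F a =
  op (\big[op/idx]_(a : {set T} | x \notin a) F a)
     (\big[op/idx]_(a : {set T} | x \notin a) F (x |: a)).
Proof.
rewrite (bigID (fun a : {set T} => x \notin a)) /=; congr (op _ _).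
rewrite (reindex_onto (fun a : {set T} => x |: a) (fun a : {set T} => a :\ x)) /=.
  apply: eq_bigl => a; rewrite setU11 /=.
  apply/idP/idP => [/eqP <-|xa]; first by rewrite setD11.
  by rewrite setU1K.
by move=> a /negPn xa; rewrite setD1K.
Qed.

Lemma setU1I_notin x a b : x \notin b -> (x |: a) :&: b = a :&: b.
Proof.
move=> xb; rewrite setIUl (_ : [set x] :&: b = set0) ?set0U //.
by apply/eqP; rewrite setI_eq0 disjoints1.
Qed.

Lemma disjointsU1 x a b : x \notin b -> [disjoint x |: a & b] = [disjoint a & b].
Proof. by move=> xb; rewrite -!setI_eq0 setU1I_notin. Qed.

Definition disj_pairs A B : nat :=
  \sum_(a : {set T}) \sum_(b : {set T}) (A a && B b && [disjoint a & b]).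

Definition avoiding x A : pred {set T} := fun a => A a && (x \notin a).
Definition link x A : pred {set T} := fun a => (x \notin a) && A (x |: a).

Lemma eq_disj_pairs A B A' B' :
  A =1 A' -> B =1 B' -> disj_pairs A B = disj_pairs A' B'.
Proof.
by move=> eA eB; apply: eq_bigr => a _; apply: eq_bigr => b _; rewrite eA eB.
Qed.

Lemma disj_pairs_notin x A B :
  (forall a, A a -> x \notin a) -> (forall b, B b -> x \notin b) ->
  disj_pairs A B = \sum_(a : {set T} | x \notin a) \sum_(b : {set T} | x \notin b)
                     (A a && B b && [disjoint a & b]).
Proof.
move=> xA xB; rewrite /disj_pairs (big_setU1_split _ x) /= [X in _ + X]big1 ?addn0.
  apply: eq_bigr => a _; rewrite (big_setU1_split _ x) /= [X in _ + X]big1 ?addn0 //.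
  by move=> b _; case Bb: (B _); rewrite ?andbF //; move: (xB _ Bb); rewrite setU11.
move=> a _; apply: big1 => b _; case Aa: (A _) => //.
by move: (xA _ Aa); rewrite setU11.
Qed.

(* Disjoint sets cannot both contain [x]: split by the side containing it. *)
Lemma disj_pairs_pivot x A B :
  disj_pairs A B = disj_pairs (avoiding x A) (avoiding x B)
    + disj_pairs (link x A) (avoiding x B) + disj_pairs (avoiding x A) (link x B).
Proof.
rewrite {1}/disj_pairs !(@disj_pairs_notin x); try by move=> ? /andP[].
rewrite (big_setU1_split _ x) /=.
under eq_bigr => a _ do rewrite (big_setU1_split _ x) /=.
under [X in _ + X = _]eq_bigr => a _ do rewrite (big_setU1_split _ x) /=.
rewrite -!big_split /=; apply: eq_bigr => a xa.
rewrite -!big_split /=; apply: eq_bigr => b xb.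
rewrite /avoiding /link xa xb !andbT /= disjointsU1 //.
rewrite [[disjoint a & x |: b]]disjoint_sym disjointsU1 // [[disjoint b & a]]disjoint_sym.
have -> : [disjoint x |: a & x |: b] = false.
  by apply/negbTE; rewrite -setI_eq0 -setUIr; apply/set0Pn; exists x; rewrite setU11.
by rewrite andbF addn0 addnAC.
Qed.

Lemma disj_pairs_pivot_le x A B :
  (forall a b, x \notin a -> x \notin b -> A (x |: a) -> B (x |: b) ->
     ~~ [disjoint a & b]) ->
  disj_pairs A B <=
    disj_pairs (fun a => avoiding x A a || link x A a) (avoiding x B)
  + disj_pairs (avoiding x A) (fun b => avoiding x B b || link x B b).
Proof.
move=> nsingle; rewrite (disj_pairs_pivot x) /disj_pairs -!big_split /=.
apply: leq_sum => a _; rewrite -!big_split /=; apply: leq_sum => b _.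
move: (nsingle a b); rewrite /avoiding /link.
by case: (x \in a); case: (x \in b); case: (A a); case: (A (x |: a));
   case: (B b); case: (B (x |: b)); case: [disjoint a & b] => // /(_ isT isT isT isT).
Qed.

Lemma disj_pairs_set0 A B :
  (forall a, A a -> a = set0) -> (forall b, B b -> b = set0) -> disj_pairs A B <= 1.
Proof.
move=> A0 B0; rewrite /disj_pairs (bigD1 set0) //= [X in _ + X]big1 ?addn0; last first.
  move=> a /negPf na; apply: big1 => b _; case Aa: (A a) => //.
  by move: na; rewrite (A0 _ Aa) eqxx.
rewrite (bigD1 set0) //= [X in _ + X]big1 ?addn0; first by case: (_ && _).
by move=> b /negPf nb; case Bb: (B b); rewrite ?andbF //; move: nb; rewrite (B0 _ Bb) eqxx.
Qed.

Lemma disj_pairs_no_single_meet n S A B : #|S| = n ->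
  (forall a, A a -> a \subset S) -> (forall b, B b -> b \subset S) ->
  (forall a b, A a -> B b -> #|a :&: b| != 1) -> disj_pairs A B <= 2 ^ n.
Proof.
elim: n S A B => [|n IH] S A B cS sA sB nsingle.
  move/eqP: cS; rewrite cards_eq0 => /eqP S0.
  by apply: disj_pairs_set0 => [a /sA|b /sB]; rewrite S0 subset0 => /eqP.
have [x xS] : exists x, x \in S by apply/set0Pn; rewrite -card_gt0 cS.
have cSx : #|S :\ x| = n by move: (cardsD1 x S); rewrite xS cS add1n => -[].
apply: leq_trans (disj_pairs_pivot_le (x := x) _) _.
  move=> a b xa xb Axa Bxb; apply: contra (nsingle _ _ Axa Bxb) => dab.
  by rewrite -setUIr (disjoint_setI0 dab) setU0 cards1.
rewrite expnS mul2n -addnn; apply: leq_add; apply: (IH (S :\ x)) => //.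
- move=> a /orP[/andP[/sA aS xa]|/andP[xa /sA aS]]; rewrite subsetD1 xa andbT //.
  exact: subset_trans (subsetUr _ _) aS.
- by move=> b /andP[/sB bS xb]; rewrite subsetD1 xb bS.
- move=> a b /orP[/andP[Aa _]|/andP[xa Axa]] /andP[Bb xb]; first exact: nsingle.
  by rewrite -(setU1I_notin a xb); apply: nsingle.
- by move=> a /andP[/sA aS xa]; rewrite subsetD1 xa aS.
- move=> b /orP[/andP[/sB bS xb]|/andP[xb /sB bS]]; rewrite subsetD1 xb andbT //.
  exact: subset_trans (subsetUr _ _) bS.
move=> a b /andP[Aa xa] /orP[/andP[Bb _]|/andP[xb Bxb]]; first exact: nsingle.
by rewrite setIC -(setU1I_notin b xa) setIC; apply: nsingle.
Qed.

Lemma disj_pairs_subsets n S : #|S| = n ->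
  disj_pairs (fun a => a \subset S) (fun b => b \subset S) = 3 ^ n.
Proof.
elim: n S => [|n IH] S cS.
  move/eqP: cS; rewrite cards_eq0 => /eqP ->.
  rewrite /disj_pairs (bigD1 set0) ?sub0set //= [X in _ + X]big1 ?addn0; last first.
    by move=> a /negPf na; apply: big1 => b _; rewrite subset0 na.
  rewrite (bigD1 set0) ?sub0set //= [X in _ + X]big1 ?addn0.
    by rewrite -setI_eq0 setI0 eqxx.
  by move=> b /negPf nb; rewrite subset0 nb.
have [x xS] : exists x, x \in S by apply/set0Pn; rewrite -card_gt0 cS.
have cSx : #|S :\ x| = n by move: (cardsD1 x S); rewrite xS cS add1n => -[].
have avoidS a : avoiding x (fun a => a \subset S) a = (a \subset S :\ x).
  by rewrite /avoiding subsetD1.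
have linkS a : link x (fun a => a \subset S) a = (a \subset S :\ x).
  by rewrite /link subsetD1 subUset sub1set xS andbC.
rewrite (disj_pairs_pivot x) !(eq_disj_pairs (A' := fun a => a \subset S :\ x)
                                             (B' := fun b => b \subset S :\ x)) //.
by rewrite IH // expnS mulSn mul2n -addnn addnA.
Qed.

(* The classes [rho a b = i] are rectangles avoiding the pairs with
   [|a :&: b| = 1], so each holds at most [2 ^ #|T|] disjoint pairs. *)
Lemma disj_pairs_cover_le (r : nat) (rho : {set T} -> {set T} -> nat) :
  (forall a b, [disjoint a & b] -> rho a b < r) ->
  (forall a b' a' b, [disjoint a & b'] -> [disjoint a' & b] ->
     rho a b' = rho a' b -> #|a :&: b| != 1) ->
  3 ^ #|T| <= r * 2 ^ #|T|.
Proof.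
move=> rho_lt rect.
pose row (i : nat) : pred {set T} :=
  fun a => [exists b : {set T}, [disjoint a & b] && (rho a b == i)].
pose col (i : nat) : pred {set T} :=
  fun b => [exists a : {set T}, [disjoint a & b] && (rho a b == i)].
have rect_le i : disj_pairs (row i) (col i) <= 2 ^ #|T|.
  apply: (@disj_pairs_no_single_meet _ setT); rewrite ?cardsT ?subsetT //.
  move=> a b /existsP[b' /andP[ab' /eqP ri]] /existsP[a' /andP[a'b /eqP ci]].
  by apply: rect ab' a'b _; rewrite ri ci.
rewrite -(disj_pairs_subsets (S := setT)) ?cardsT //.
apply: (@leq_trans (\sum_(i < r) disj_pairs (row i) (col i))); last first.
  by rewrite -[X in _ <= X * _]card_ord -sum_nat_const; apply: leq_sum => i _.
rewrite /disj_pairs [X in _ <= X]exchange_big /=; apply: leq_sum => a _.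
rewrite [X in _ <= X]exchange_big /=; apply: leq_sum => b _.
rewrite !subsetT /=; case: (boolP [disjoint a & b]) => // dab.
rewrite (bigD1 (Ordinal (rho_lt _ _ dab))) //= andbT -[X in X <= _]addn0 leq_add //.
by rewrite lt0b; apply/andP; split; apply/existsP; [exists b|exists a]; rewrite dab eqxx.
Qed.

End DisjointPairs.

Lemma sum_offdiag_pairs (T : finType) (S : {set T}) :
  \sum_(i : T) \sum_(j : T) ((i != j) && (i \in S) && (j \in S)) = #|S| * (#|S| - 1).
Proof.
rewrite -sum_nat_const [RHS]big_mkcond /=; apply: eq_bigr => i _.
case: (boolP (i \in S)) => iS; last by apply: big1 => j _; rewrite andbF.
rewrite (cardsD1 i S) iS add1n subn1 /= -sum1_card [RHS]big_mkcond /=.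
by apply: eq_bigr => j _; rewrite !inE andbT [j == i]eq_sym; case: (i != j); case: (j \in S).
Qed.

(** * The conflict graph *)

Section ConflictGraph.
Variable m : nat.

(* The literal [((i, j), u, v)] stands for the partial assignment
   [i |-> u, j |-> v] of truth values to the variables ['I_m]. *)
Definition literal := ((('I_m * 'I_m) * bool) * bool)%type.
Definition var1 (x : literal) := x.1.1.1.
Definition var2 (x : literal) := x.1.1.2.
Definition bit1 (x : literal) := x.1.2.
Definition bit2 (x : literal) := x.2.

Definition compatible (x y : literal) : bool :=
  [&& (var1 x == var1 y) ==> (bit1 x == bit1 y),
      (var1 x == var2 y) ==> (bit1 x == bit2 y),
      (var2 x == var1 y) ==> (bit2 x == bit1 y)
    & (var2 x == var2 y) ==> (bit2 x == bit2 y)].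

Definition conflict x y := (x != y) && ~~ compatible x y.

Definition conflict_adj (u v : literal * bool) :=
  (u.2 != v.2) && ((u.1 == v.1) || conflict u.1 v.1).

Definition nverts := #|{: literal * bool}|.
Definition cgraph : rel 'I_nverts :=
  fun i j => conflict_adj (enum_val i) (enum_val j).

Lemma compatible_sym : symmetric compatible.
Proof.
move=> x y; rewrite /compatible ![var1 y == _]eq_sym ![var2 y == _]eq_sym.
rewrite ![bit1 y == _]eq_sym ![bit2 y == _]eq_sym.
by congr (_ && _); rewrite andbCA.
Qed.

Lemma cgraph_sym : symmetric cgraph.
Proof.
move=> i j; rewrite /cgraph /conflict_adj /conflict eq_sym [_.1 == _]eq_sym.
by rewrite compatible_sym.
Qed.

Lemma cgraph_irr : irreflexive cgraph.
Proof. by move=> i; rewrite /cgraph /conflict_adj eqxx. Qed.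

Lemma cgraph_bipartite : bipartite cgraph.
Proof. by exists (fun i => (enum_val i).2) => i j /andP[]. Qed.

Lemma card_cgraph : nverts = 8 * (m * m).
Proof. by rewrite /nverts !card_prod card_ord card_bool; lia. Qed.

Lemma card_edges_cgraph : #|{: edge_t cgraph}| <= nverts * nverts.
Proof.
rewrite card_sig; apply: (@leq_trans #|[set A : {set 'I_nverts} | #|A| == 2]|).
  apply: subset_leq_card; apply/subsetP => A; rewrite !inE.
  case/existsP=> u /existsP[v /andP[uv /eqP ->]].
  by rewrite cards2; case: (eqVneq u v) uv => [->|]; rewrite ?cgraph_irr.
rewrite card_draws card_ord bin2 leq_half_double.
by move: nverts => n; nia.
Qed.

Definition lit_edge_set (x : literal) : {set 'I_nverts} :=
  [set enum_rank (x, false); enum_rank (x, true)].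

Lemma mem_lit_edge_set u x : (u \in lit_edge_set x) = ((enum_val u).1 == x).
Proof.
rewrite !inE -!(inj_eq enum_val_inj) !enum_rankK.
by case: (enum_val u) => y [] /=; rewrite !xpair_eqE ?andbT ?andbF ?orbF.
Qed.

Lemma rank_in_lit_edge_set x s : enum_rank (x, s) \in lit_edge_set x.
Proof. by rewrite mem_lit_edge_set enum_rankK. Qed.

Lemma lit_edge_set_inj : injective lit_edge_set.
Proof.
move=> x y exy; have := rank_in_lit_edge_set x false.
by rewrite exy mem_lit_edge_set enum_rankK => /eqP.
Qed.

Lemma lit_edge_proof x : edge_of cgraph (lit_edge_set x).
Proof.
apply/existsP; exists (enum_rank (x, false)); apply/existsP; exists (enum_rank (x, true)).
by rewrite /cgraph !enum_rankK /conflict_adj /= !eqxx.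
Qed.

Definition lit_edge x : edge_t cgraph := exist _ (lit_edge_set x) (lit_edge_proof x).

Lemma lit_edge_inj : injective lit_edge.
Proof. by move=> x y /(congr1 val) /lit_edge_set_inj. Qed.

Lemma induced_matching_noedge (M : {set edge_t cgraph}) A B u v :
  induced_matching M -> A \in M -> B \in M -> A != B ->
  u \in val A -> v \in val B -> ~~ cgraph u v.
Proof.
move=> /forallP/(_ A)/implyP iM AM BM AB uA vB.
have /forallP/(_ B)/implyP/(_ BM)/implyP/(_ AB)/andP[_] := iM AM.
by move=> /forallP/(_ u)/implyP/(_ uA)/forallP/(_ v)/implyP/(_ vB).
Qed.

(* [a] is the set of variables set to true. *)
Definition lit_of (a : {set 'I_m}) (ij : 'I_m * 'I_m) : literal :=
  ((ij, ij.1 \in a), ij.2 \in a).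

Definition matching_of (a : {set 'I_m}) : {set edge_t cgraph} :=
  [set lit_edge (lit_of a ij) | ij : 'I_m * 'I_m].

Definition agrees (a : {set 'I_m}) x :=
  (bit1 x == (var1 x \in a)) && (bit2 x == (var2 x \in a)).

Lemma agrees_lit_of a ij : agrees a (lit_of a ij).
Proof. by rewrite /agrees /= !eqxx. Qed.

Lemma agrees_compatible a x y : agrees a x -> agrees a y -> compatible x y.
Proof.
move=> /andP[/eqP ax /eqP bx] /andP[/eqP ay /eqP b_y].
by rewrite /compatible ax bx ay b_y; apply/and4P; split; apply/implyP => /eqP ->.
Qed.

Lemma agrees_lit_ofE a x : agrees a x -> x = lit_of a (var1 x, var2 x).
Proof.
by case: x => [[[i j] u] v]; rewrite /agrees /bit1 /bit2 /var1 /var2 /= => /andP[/eqP -> /eqP ->].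
Qed.

Lemma induced_matching_of a : induced_matching (matching_of a).
Proof.
apply/forallP => A; apply/implyP => /imsetP[ij _ ->].
apply/forallP => B; apply/implyP => /imsetP[ij' _ ->].
apply/implyP => neq.
have nxy : lit_of a ij != lit_of a ij' by apply: contra neq => /eqP ->.
apply/andP; split.
  rewrite -setI_eq0; apply/eqP/setP => u; rewrite in_setI in_set0 /= !mem_lit_edge_set.
  by apply/negbTE/negP => /andP[/eqP -> /eqP E]; move/eqP: nxy.
apply/forallP => u; apply/implyP; rewrite /= mem_lit_edge_set => /eqP ux.
apply/forallP => v; apply/implyP; rewrite /= mem_lit_edge_set => /eqP vy.
rewrite /cgraph /conflict_adj ux vy negb_and negb_or (negPf nxy) /conflict nxy negbK.
by rewrite (agrees_compatible (agrees_lit_of a ij) (agrees_lit_of a ij')) orbT.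
Qed.

Definition assigns x i v :=
  ((var1 x == i) && (bit1 x == v)) || ((var2 x == i) && (bit2 x == v)).

Lemma assigns_compatible x y i v w :
  assigns x i v -> assigns y i w -> compatible x y -> v = w.
Proof.
case/orP=> /andP[/eqP xi /eqP xv]; case/orP=> /andP[/eqP yi /eqP yw];
  case/and4P=> c1 c2 c3 c4;
  [move: c1|move: c2|move: c3|move: c4]; by rewrite xi yi eqxx xv yw => /eqP.
Qed.

Definition true_vars (M : {set edge_t cgraph}) : {set 'I_m} :=
  [set i | [exists A in M, exists x,
     (val A == lit_edge_set x) && compatible x x && assigns x i true]].

Lemma true_varsE M A x i v : induced_matching M -> A \in M -> val A = lit_edge_set x ->
  compatible x x -> assigns x i v -> (i \in true_vars M) = v.
Proof.
move=> iM AM vA cx ax; case: v ax => ax.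
  rewrite inE; apply/existsP; exists A; rewrite AM /=; apply/existsP; exists x.
  by rewrite vA eqxx cx ax.
apply/negbTE/negP; rewrite inE => /existsP[A' /andP[A'M /existsP[y]]].
case/andP=> /andP[/eqP vA' cy] ay.
have [eAA'|AA'] := eqVneq A A'.
  move: vA'; rewrite -eAA' vA => /lit_edge_set_inj exy.
  by move: ay; rewrite -exy => /assigns_compatible/(_ ax cx).
(* [(x, false)] and [(y, true)] are not adjacent, so [x] and [y] do not conflict. *)
have := induced_matching_noedge iM AM A'M AA' (u := enum_rank (x, false))
          (v := enum_rank (y, true)).
rewrite vA vA' !rank_in_lit_edge_set => /(_ isT isT).
rewrite /cgraph /conflict_adj !enum_rankK /= negb_or => /andP[nxy].
by rewrite /conflict nxy negbK => cxy; have := assigns_compatible ax ay cxy.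
Qed.

Lemma agrees_true_vars M A x : induced_matching M -> A \in M ->
  val A = lit_edge_set x -> compatible x x -> agrees (true_vars M) x.
Proof.
move=> iM AM vA cx; apply/andP; split; apply/eqP/esym; apply: (true_varsE iM AM vA cx).
  by rewrite /assigns !eqxx.
by rewrite /assigns !eqxx orbT.
Qed.

End ConflictGraph.

Local Open Scope ring_scope.

(** * Facets of convex hulls *)

Section ConvexHull.
Variables (R : realFieldType) (D I : finType).
Implicit Types (P : pred I) (v : I -> D -> R).

Lemma in_conv_vertex P v i : P i -> in_conv P v (v i).
Proof.
move=> Pi; exists (fun j => (j == i)%:R); split.
- by move=> j; rewrite ler0n.
- by move=> j nPj; case: eqP => // eji; move: nPj; rewrite eji Pi.
- by rewrite (bigD1 i) //= eqxx big1 ?addr0 // => j /negPf ->.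
move=> d; rewrite (bigD1 i) //= eqxx mul1r big1 ?addr0 // => j /negPf ->.
by rewrite mul0r.
Qed.

Lemma sub_in_conv P P' v x : (forall i, P i -> P' i) -> in_conv P v x -> in_conv P' v x.
Proof.
move=> PP' [w [w0 wP w1 xw]]; exists w; split => // i nP'.
by apply: wP; apply: contra nP' => /PP'.
Qed.

Lemma in_conv_lin_le P v (c : D -> R) (beta : R) x :
  (forall i, P i -> lin c (v i) <= beta) -> in_conv P v x -> lin c x <= beta.
Proof.
move=> cv [w [w0 wP w1 xw]].
have -> : lin c x = \sum_i w i * lin c (v i).
  rewrite /lin; under eq_bigr => d _ do rewrite xw mulr_sumr.
  rewrite exchange_big /=; apply: eq_bigr => i _; rewrite mulr_sumr.
  by apply: eq_bigr => d _; rewrite mulrCA.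
rewrite -[beta]mul1r -w1 mulr_suml; apply: ler_sum => i _.
by case: (boolP (P i)) => Pi; [exact: ler_wpM2l (w0 i) _ _ (cv i Pi)|rewrite wP // !mul0r].
Qed.

Lemma eq_affrank (S S' : (D -> R) -> Prop) r :
  (forall x, S x <-> S' x) -> affrank S r -> affrank S' r.
Proof.
move=> SS' [[q [Sq iq]] nhas]; split; first by exists q; split => // i; apply/SS'.
by case=> q' [Sq' iq']; apply: nhas; exists q'; split => // i; apply/SS'.
Qed.

End ConvexHull.

Section MatrixFacts.
Variable F : fieldType.

Lemma row_free_row_neq0 r n (A : 'M[F]_(r, n)) i : row_free A -> row i A != 0.
Proof.
move=> rf; apply/eqP => Ai0.
have : delta_mx (0 : 'I_1) i *m A = 0 *m A by rewrite mul0mx -Ai0 rowE.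
move/(row_free_inj rf)/matrixP => /(_ 0 i); rewrite !mxE !eqxx /=.
by move/eqP; rewrite oner_eq0.
Qed.

Lemma submx_mul0 n1 n2 n p (U : 'M[F]_(n1, n)) (V : 'M[F]_(n2, n)) (h : 'M[F]_(n, p)) :
  U *m h = 0 -> (V <= U)%MS -> V *m h = 0.
Proof. by move=> Uh /submxP[D ->]; rewrite -mulmxA Uh mulmx0. Qed.

Lemma separating_functional n1 n (U : 'M[F]_(n1, n)) (v : 'rV[F]_n) :
  ~~ (v <= U)%MS -> exists h : 'cV[F]_n, U *m h = 0 /\ (v *m h) 0 0 = 1.
Proof.
rewrite submxE => /rV0Pn [j vj].
exists (((v *m cokermx U) 0 j)^-1 *: (cokermx U *m delta_mx j 0)); split.
  by rewrite scalemxAr mulmxA mulmx_coker mul0mx.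
by rewrite scalemxAr mulmxA -scalemxAr -colE mxE [X in _ * X]mxE mulVf.
Qed.

Lemma rank_col_mx_le n1 n (A : 'M[F]_(n1, n)) (v : 'rV[F]_n) :
  (\rank (col_mx A v) <= (\rank A).+1)%N.
Proof.
rewrite -(addsmxE A v); apply: leq_trans (mxrank_adds_leqif A v).1 _.
by rewrite -[X in (_ <= X)%N]addn1 leq_add2l rank_leq_row.
Qed.

End MatrixFacts.

(* A point [x] of [R^k] is represented by the row [(1, x)], so that affine
   dependencies become linear ones and affine functionals become columns. *)
Section Homogenization.
Variables (R : realFieldType) (k : nat).

Definition homog (x : 'I_k -> R) : 'rV[R]_(k.+1) :=
  \row_(j < k.+1) (if unlift ord0 j is Some j' then x j' else 1).

Lemma homog0 x : homog x 0 ord0 = 1.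
Proof. by rewrite mxE unlift_none. Qed.

Lemma homogS x j : homog x 0 (lift ord0 j) = x j.
Proof. by rewrite mxE liftK. Qed.

Definition homog_mx r (q : 'I_r -> 'I_k -> R) : 'M[R]_(r, k.+1) :=
  \matrix_(i, j) homog (q i) 0 j.

Lemma row_homog_mx r q i : row i (@homog_mx r q) = homog (q i).
Proof. by apply/rowP => j; rewrite !mxE. Qed.

Lemma homog_mx_mul_eq0 r (q : 'I_r -> 'I_k -> R) (lam : 'I_r -> R) :
  (\row_i lam i) *m homog_mx q = 0 <->
  \sum_i lam i = 0 /\ forall d, \sum_i lam i * q i d = 0.
Proof.
split=> [/rowP lamq0|[lam0 lamq0]].
  split=> [|d]; [have := lamq0 ord0 | have := lamq0 (lift ord0 d)];
    rewrite [RHS]mxE => {2}<-; rewrite mxE; apply: eq_bigr => i _; rewrite !mxE.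
    by rewrite unlift_none mulr1.
  by rewrite liftK.
apply/rowP => j; rewrite !mxE; case: (unliftP ord0 j) => [j'|] ->.
  by rewrite -[RHS](lamq0 j'); apply: eq_bigr => i _; rewrite !mxE liftK.
by rewrite -[RHS]lam0; apply: eq_bigr => i _; rewrite !mxE unlift_none mulr1.
Qed.

Lemma aff_indepE r (q : 'I_r -> 'I_k -> R) : aff_indep q <-> row_free (homog_mx q).
Proof.
split=> [indep|rf lam lam0 lamq0 i].
  apply: inj_row_free => v vq0; apply/rowP => i; rewrite mxE.
  have /homog_mx_mul_eq0[lam0 lamq0] : (\row_i v 0 i) *m homog_mx q = 0.
    by rewrite -vq0; congr (_ *m _); apply/rowP => j; rewrite !mxE.
  exact: indep lam0 lamq0 i.
have /(row_free_inj rf)/rowP/(_ i) : (\row_i lam i) *m homog_mx q = 0 *m homog_mx q.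
  by rewrite mul0mx; apply/homog_mx_mul_eq0.
by rewrite !mxE.
Qed.

Definition slack (phi : 'cV[R]_(k.+1)) (x : 'I_k -> R) : R := (homog x *m phi) 0 0.

Lemma slackB phi h t x : slack (phi - t *: h) x = slack phi x - t * slack h x.
Proof. by rewrite /slack mulmxBr -scalemxAr !mxE. Qed.

Lemma slackN h x : slack (- h) x = - slack h x.
Proof. by rewrite /slack mulmxN mxE. Qed.

Definition ineq_functional (a : 'I_k -> R) (b : R) : 'cV[R]_(k.+1) :=
  \col_j (if unlift ord0 j is Some j' then - a j' else b).

Lemma slack_ineq_functional a b x : slack (ineq_functional a b) x = b - lin a x.
Proof.
rewrite /slack mxE big_ord_recl homog0 mul1r !mxE unlift_none /lin -sumrN.
by congr (_ + _); apply: eq_bigr => j _; rewrite homogS !mxE liftK mulrN mulrC.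
Qed.

Lemma slackE psi x : slack psi x = psi ord0 0 - lin (fun j => - psi (lift ord0 j) 0) x.
Proof.
rewrite /slack mxE big_ord_recl homog0 mul1r /lin -sumrN.
by congr (_ + _); apply: eq_bigr => j _; rewrite homogS mulNr opprK mulrC.
Qed.

End Homogenization.

Lemma slack_eq0_sub (R : realFieldType) (k n1 : nat) (U : 'M[R]_(n1, k.+1)) h x :
  U *m h = 0 -> (homog x <= U)%MS -> slack h x = 0.
Proof. by move=> Uh /(submx_mul0 Uh) hx0; rewrite /slack hx0 mxE. Qed.

Section FacetsOfHull.
Variables (R : realFieldType) (k m : nat) (p : 'I_m -> 'I_k -> R).
Implicit Types (J : pred 'I_m) (phi h : 'cV[R]_(k.+1)).

Definition hull_mx J : 'M[R]_(m, k.+1) :=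
  \matrix_(i, j) (if J i then homog (p i) 0 j else 0).

Lemma row_hull_mx J i : row i (hull_mx J) = if J i then homog (p i) else 0.
Proof. by apply/rowP => j; rewrite !mxE; case: (J i) => //; rewrite mxE. Qed.

Lemma homog_sub_hull J i : J i -> (homog (p i) <= hull_mx J)%MS.
Proof. by move=> Ji; have := row_sub i (hull_mx J); rewrite row_hull_mx Ji. Qed.

Lemma hull_mx_mono J J' : (forall i, J i -> J' i) -> (hull_mx J <= hull_mx J')%MS.
Proof.
move=> JJ'; apply/row_subP => i; rewrite row_hull_mx.
by case: (boolP (J i)) => Ji; [apply: homog_sub_hull; apply: JJ'|apply: sub0mx].
Qed.

Lemma homog_conv (w : 'I_m -> R) x :
  \sum_i w i = 1 -> (forall d, x d = \sum_i w i * p i d) ->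
  homog x = \sum_i w i *: homog (p i).
Proof.
move=> w1 xw; apply/rowP => j; rewrite summxE; case: (unliftP ord0 j) => [j'|] ->.
  by rewrite homogS xw; apply: eq_bigr => i _; rewrite mxE homogS.
by rewrite homog0 -w1; apply: eq_bigr => i _; rewrite mxE homog0 mulr1.
Qed.

Lemma homog_conv_sub J x : in_conv J p x -> (homog x <= hull_mx J)%MS.
Proof.
case=> w [w0 wJ w1 xw]; rewrite (homog_conv w1 xw); apply: summx_sub => i _.
case: (boolP (J i)) => Ji; last by rewrite wJ // scale0r sub0mx.
by apply: scalemx_sub; apply: homog_sub_hull.
Qed.

Lemma has_aff_indep_le_rank J r :
  has_aff_indep (in_conv J p) r -> (r <= \rank (hull_mx J))%N.
Proof.
case=> q [Jq /aff_indepE rf]; rewrite -(eqP rf); apply: mxrankS.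
by apply/row_subP => i; rewrite row_homog_mx; apply: homog_conv_sub.
Qed.

Lemma has_aff_indep_rank J : has_aff_indep (in_conv J p) (\rank (hull_mx J)).
Proof.
pose f := maxrankfun (hull_mx J).
have rf := maxrowsub_free (hull_mx J).
have Jf i : J (f i).
  apply/negPn/negP => nJ; have := row_free_row_neq0 i rf.
  by rewrite row_rowsub row_hull_mx (negPf nJ) eqxx.
exists (fun i => p (f i)); split; first by move=> i; apply: in_conv_vertex.
apply/aff_indepE; suff -> : homog_mx (fun i => p (f i)) = rowsub f (hull_mx J) by [].
by apply/row_matrixP => i; rewrite row_homog_mx row_rowsub row_hull_mx Jf.
Qed.

Lemma affrank_hull J : affrank (in_conv J p) (\rank (hull_mx J)).
Proof.
by split; [apply: has_aff_indep_rank|move/has_aff_indep_le_rank; rewrite ltnn].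
Qed.

Definition valid phi := forall i, 0 <= slack phi (p i).
Definition tight phi : pred 'I_m := fun i => slack phi (p i) == 0.

Lemma slack_conv phi (w : 'I_m -> R) x :
  \sum_i w i = 1 -> (forall d, x d = \sum_i w i * p i d) ->
  slack phi x = \sum_i w i * slack phi (p i).
Proof.
move=> w1 xw; rewrite /slack (homog_conv w1 xw) mulmx_suml summxE.
by apply: eq_bigr => i _; rewrite -scalemxAl mxE.
Qed.

Lemma slack_ge0 phi x : valid phi -> in_conv predT p x -> 0 <= slack phi x.
Proof.
move=> vphi [w [w0 _ w1 xw]]; rewrite (slack_conv phi w1 xw).
by apply: sumr_ge0 => i _; apply: mulr_ge0.
Qed.

Lemma tight_conv phi x : valid phi ->
  (in_conv predT p x /\ slack phi x = 0) <-> in_conv (tight phi) p x.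
Proof.
move=> vphi; split=> [[[w [w0 _ w1 xw]] sx0]|[w [w0 wJ w1 xw]]]; last first.
  split; first by exists w.
  rewrite (slack_conv phi w1 xw) big1 // => i _.
  by case: (boolP (tight phi i)) => [/eqP ->|/wJ ->]; rewrite ?mulr0 ?mul0r.
exists w; split => // i nti.
have /eqP : \sum_i w i * slack phi (p i) = 0 by rewrite -(slack_conv phi w1 xw).
rewrite psumr_eq0 => [/allP/(_ i (mem_index_enum _))|j _]; last exact: mulr_ge0.
by rewrite /= mulf_eq0 => /orP[/eqP //|ti]; move: nti; rewrite /tight ti.
Qed.

Lemma hull_tight_mul phi : hull_mx (tight phi) *m phi = 0.
Proof.
apply/row_matrixP => i; rewrite row_mul row_hull_mx row0.
case: (boolP (tight phi i)) => [/eqP ti|_]; last by rewrite mul0mx.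
by apply/rowP => j; rewrite ord1 [RHS]mxE.
Qed.

(* Tilting [phi] along [h] as far as validity allows makes a new vertex tight. *)
Lemma rotate_functional phi h z :
  valid phi -> hull_mx (tight phi) *m h = 0 -> (exists i, 0 < slack h (p i)) ->
  0 < slack phi z -> slack h z <= 0 ->
  exists psi, [/\ valid psi, (forall i, tight phi i -> tight psi i), 0 < slack psi z &
     (\rank (hull_mx (tight phi)) < \rank (hull_mx (tight psi)))%N].
Proof.
move=> vphi Mh [i0 hi0] sz hz.
pose P i := 0 < slack h (p i).
pose ratio i := slack phi (p i) / slack h (p i).
have [ip Pip min_ip] : extremum_spec <=%O P ratio (Order.arg_min i0 P ratio).
  exact: arg_minP.
pose t := ratio ip.
have t0 : 0 <= t by apply: divr_ge0 => //; apply: ltW.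
have tight_sub i : tight phi i -> tight (phi - t *: h) i.
  move=> ti; rewrite /tight slackB (eqP ti).
  by rewrite (slack_eq0_sub Mh (homog_sub_hull ti)) mulr0 subr0.
exists (phi - t *: h); split => //.
- move=> i; rewrite slackB subr_ge0.
  have [hi|hi] := ltrP 0 (slack h (p i)); first by rewrite -ler_pdivlMr // min_ip.
  exact: le_trans (mulr_ge0_le0 t0 hi) (vphi i).
- by rewrite slackB; apply: lt_le_trans sz _; rewrite lerDl -mulrN mulr_ge0 // oppr_ge0.
apply: rank_ltmx; rewrite ltmxE hull_mx_mono //=; apply/negP => sub.
have tip : tight (phi - t *: h) ip by rewrite /tight slackB divfK ?subrr // gt_eqF.
have := slack_eq0_sub Mh (submx_trans (homog_sub_hull tip) sub).
by move/eqP; rewrite (gt_eqF Pip).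
Qed.

Lemma rank_hull_le n1 (U : 'M[R]_(n1, k.+1)) :
  (forall i, (homog (p i) <= U)%MS) -> (\rank (hull_mx predT) <= \rank U)%N.
Proof. by move=> pU; apply: mxrankS; apply/row_subP => i; rewrite row_hull_mx; apply: pU. Qed.

Lemma rank_tight_lt phi z : valid phi -> in_conv predT p z -> 0 < slack phi z ->
  (\rank (hull_mx (tight phi)) < \rank (hull_mx predT))%N.
Proof.
move=> vphi [w [w0 _ w1 xw]] sz.
have [i nti] : exists i, ~~ tight phi i.
  apply/existsP; apply: contraLR sz; rewrite negb_exists => /forallP ti.
  rewrite -leNgt (slack_conv phi w1 xw) big1 // => i _.
  by move: (ti i); rewrite negbK => /eqP ->; rewrite mulr0.
apply: rank_ltmx; rewrite ltmxE hull_mx_mono //=; apply/negP => sub.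
have := slack_eq0_sub (hull_tight_mul phi)
  (submx_trans (homog_sub_hull (J := predT) (i := i) isT) sub).
by move=> ti0; move: nti; rewrite /tight ti0 eqxx.
Qed.

Lemma two_sided_direction n1 (M : 'M[R]_(n1, k.+1)) :
  ((\rank M).+2 <= \rank (hull_mx predT))%N ->
  exists h, [/\ M *m h = 0, exists i, 0 < slack h (p i) & exists i, slack h (p i) < 0].
Proof.
move=> rkM.
have [j1 nj1] : exists j1, ~~ (homog (p j1) <= M)%MS.
  apply/existsP; apply: contraLR rkM; rewrite negb_exists => /forallP pM.
  by rewrite -ltnNge ltnS leqW // rank_hull_le // => i; have := pM i; rewrite negbK.
have [j2 nj2] : exists j2, ~~ (homog (p j2) <= col_mx M (homog (p j1)))%MS.
  apply/existsP; apply: contraLR rkM; rewrite negb_exists => /forallP pM.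
  rewrite -ltnNge ltnS; apply: leq_trans (rank_col_mx_le M (homog (p j1))).
  by rewrite rank_hull_le // => i; have := pM i; rewrite negbK.
have [psi1 [M1 s11]] := separating_functional nj1.
have [psi2 [/eqP M2 s22]] := separating_functional nj2.
move: M2; rewrite mul_col_mx col_mx_eq0 => /andP[/eqP M2 /eqP s21].
change (slack psi1 (p j1) = 1) in s11; change (slack psi2 (p j2) = 1) in s22.
have {}s21 : slack psi2 (p j1) = 0 by rewrite /slack s21 mxE.
pose a := slack psi1 (p j2).
exists (psi1 - (a + 1) *: psi2); split.
- by rewrite mulmxBr -scalemxAr M1 M2 scaler0 subr0.
- by exists j1; rewrite slackB s11 s21 mulr0 subr0 ltr01.
exists j2; rewrite slackB -/a s22 mulr1 opprD addrA subrr sub0r.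
by rewrite oppr_lt0 ltr01.
Qed.

(* Repeated rotation raises the rank of the tight vertices, keeping [z] strictly
   inside, until they span a hyperplane of the hull: a facet. *)
Lemma facet_functional n phi z :
  (\rank (hull_mx predT) - \rank (hull_mx (tight phi)) <= n)%N ->
  valid phi -> in_conv predT p z -> 0 < slack phi z ->
  exists psi, [/\ valid psi, (forall i, tight phi i -> tight psi i), 0 < slack psi z &
     (\rank (hull_mx (tight psi))).+1 = \rank (hull_mx predT)].
Proof.
elim: n phi => [|n IH] phi rk vphi cz sz; have lt := rank_tight_lt vphi cz sz.
  by move: rk; rewrite leqn0 subn_eq0 leqNgt lt.
have [rk1|rk1] := eqVneq (\rank (hull_mx (tight phi))).+1 (\rank (hull_mx predT)).
  by exists phi.
have [h [Mh [i1 h1] [i2 h2]]] : exists h,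
    [/\ hull_mx (tight phi) *m h = 0, exists i, 0 < slack h (p i)
      & exists i, slack h (p i) < 0].
  by apply: two_sided_direction; rewrite ltn_neqAle rk1 lt.
have [psi [vpsi tpsi spsi rpsi]] : exists psi, [/\ valid psi,
    (forall i, tight phi i -> tight psi i), 0 < slack psi z &
    (\rank (hull_mx (tight phi)) < \rank (hull_mx (tight psi)))%N].
  have [hz|hz] := lerP (slack h z) 0.
    by apply: (rotate_functional (h := h)) => //; exists i1.
  apply: (rotate_functional (h := - h)) => //; rewrite ?slackN ?oppr_le0 ?ltW //.
    by rewrite mulmxN Mh oppr0.
  by exists i2; rewrite slackN oppr_gt0.
have [|psi' [v' t' s' r']] := IH psi _ vpsi cz spsi.
  by have := rank_tight_lt vpsi cz spsi; lia.
by exists psi'; split => // i /tpsi /t'.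
Qed.

Lemma face_avoiding_facet (G : ('I_k -> R) -> Prop) z :
  is_face (in_conv predT p) G -> in_conv predT p z -> ~ G z ->
  exists F, [/\ is_facet (in_conv predT p) F, (forall y, G y -> F y) & ~ F z].
Proof.
case=> a [b [Gvalid GE]] cz nGz.
pose phi := ineq_functional a b.
have vphi : valid phi.
  by move=> i; rewrite slack_ineq_functional subr_ge0; apply: Gvalid; apply: in_conv_vertex.
have sz : 0 < slack phi z.
  rewrite lt_neqAle slack_ge0 // andbT eq_sym; apply/eqP => sz0; apply: nGz.
  apply/GE; split => //; apply/eqP.
  by move/eqP: sz0; rewrite slack_ineq_functional subr_eq0 eq_sym.
have [psi [vpsi tpsi spsi rpsi]] := facet_functional (leqnn _) vphi cz sz.
pose F y := in_conv predT p y /\ slack psi y = 0.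
have FE y : F y <-> in_conv (tight psi) p y by apply: tight_conv.
exists F; split.
- split.
    exists (fun j => - psi (lift ord0 j) 0), (psi ord0 0); split.
      by move=> x cx; have := slack_ge0 vpsi cx; rewrite slackE subr_ge0.
    move=> y; rewrite /F slackE; split=> -[cy e]; split=> //; last by rewrite e subrr.
    by apply/eqP; rewrite eq_sym -subr_eq0 e.
  exists (\rank (hull_mx (tight psi))); rewrite rpsi; split; first exact: affrank_hull.
  apply: (eq_affrank (S := in_conv (tight psi) p)) => [y|]; first by rewrite FE.
  exact: affrank_hull.
- move=> y /GE [cy ey]; apply/FE/(sub_in_conv tpsi)/tight_conv => //.
  by rewrite slack_ineq_functional ey subrr.
by case=> _ sz0; move: spsi; rewrite sz0 ltxx.
Qed.

End FacetsOfHull.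

(** * The unique-disjointness inequalities *)

Section UniqueDisjointness.
Variables (R : realFieldType) (m : nat).
Implicit Types (a b : {set 'I_m}) (M : {set edge_t (@cgraph m)}).

Definition lit_weight b (x : literal m) : nat :=
  if compatible x x then
    (2 - ((var1 x == var2 x) && (var1 x \in b) && ~~ bit1 x)
       - ((var1 x != var2 x) && (var1 x \in b) && (var2 x \in b) && bit1 x && bit2 x))%N
  else 0%N.

Definition edge_weight b (A : edge_t (@cgraph m)) : R :=
  if [pick x | val A == lit_edge_set x] is Some x then (lit_weight b x)%:R else 0.

Definition rhs b : R := (2 * (m * m) + 1)%:R - #|b|%:R.

Definition indicator M (A : edge_t (@cgraph m)) : R := if A \in M then 1 else 0.

Lemma edge_weight_lit_edge b x : edge_weight b (lit_edge x) = (lit_weight b x)%:R.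
Proof.
rewrite /edge_weight; case: pickP => [y /eqP /lit_edge_set_inj -> //|/(_ x)].
by rewrite eqxx.
Qed.

Lemma edge_weight_ge0 b A : 0 <= edge_weight b A.
Proof. by rewrite /edge_weight; case: pickP. Qed.

Lemma indicator_in_polytope M :
  induced_matching M -> induced_matching_polytope (indicator M).
Proof.
move=> iM; exists (fun M' => (M' == M)%:R); split.
- by move=> M'; rewrite ler0n.
- by move=> M'; case: eqP => // ->; rewrite iM.
- by rewrite (bigD1 M) //= eqxx big1 ?addr0 // => M' /negPf ->.
move=> A; rewrite (bigD1 M) //= eqxx mul1r big1 ?addr0 // => M' /negPf ->.
by rewrite mul0r.
Qed.

Lemma lin_indicator_matching_of b a :
  lin (edge_weight b) (indicator (matching_of a)) =
  (\sum_i \sum_j lit_weight b (lit_of a (i, j)))%:R.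
Proof.
rewrite /lin /indicator
  (eq_bigr (fun A => if A \in matching_of a then edge_weight b A else 0)).
  rewrite -big_mkcond big_imset /=; last by move=> ij ij' _ _ /lit_edge_inj [->].
  by rewrite pair_big natr_sum; apply: eq_bigr => -[i j] _; rewrite edge_weight_lit_edge.
by move=> A _; case: ifP; rewrite ?mulr1 ?mulr0.
Qed.

Lemma sum_lit_weight b a :
  (\sum_i \sum_j lit_weight b (lit_of a (i, j)) + #|b :\: a|
     + #|a :&: b| * (#|a :&: b| - 1) = 2 * (m * m))%N.
Proof.
pose diag (i j : 'I_m) := ((i == j) && (i \in b :\: a) : nat).
pose offdiag (i j : 'I_m) := ((i != j) && (i \in a :&: b) && (j \in a :&: b) : nat).
have weightE i j : (lit_weight b (lit_of a (i, j)) + diag i j + offdiag i j = 2)%N.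
  rewrite /lit_weight (agrees_compatible (agrees_lit_of a (i, j)) (agrees_lit_of a (i, j))).
  rewrite /diag /offdiag /var1 /var2 /bit1 /bit2 !inE /=.
  case: eqP => [->|_] /=; first by case: (j \in b); case: (j \in a).
  by case: (i \in b); case: (j \in b); case: (i \in a); case: (j \in a).
have diagE : (\sum_i \sum_j diag i j = #|b :\: a|)%N.
  rewrite -sum1_card [RHS]big_mkcond /=; apply: eq_bigr => i _.
  rewrite (bigD1 i) //= big1 ?addn0; first by rewrite /diag eqxx.
  by move=> j /negPf nj; rewrite /diag eq_sym nj.
rewrite -diagE -sum_offdiag_pairs -!big_split /=.
rewrite (eq_bigr (fun _ => 2 * m)%N) => [|i _]; first by rewrite sum_nat_const card_ord mulnCA.
rewrite -!big_split /= (eq_bigr (fun _ => 2%N)) => [|j _].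
  by rewrite sum_nat_const card_ord mulnC.
by rewrite -(weightE i j).
Qed.

Lemma rhs_sub_lin_matching_of a b :
  rhs b - lin (edge_weight b) (indicator (matching_of a)) = (#|a :&: b|%:R - 1) ^+ 2.
Proof.
rewrite lin_indicator_matching_of /rhs -(cardsID a b) setIC.
have := sum_lit_weight b a.
move: (\sum_i _)%N #|b :\: a| #|a :&: b| => w d [|s]; rewrite ?muln0 ?subn1 /=.
  by move/(congr1 (GRing.natmul (1 : R))); rewrite !natrD !natrM => <-; ring.
move/(congr1 (GRing.natmul (1 : R))); rewrite -addn1 !natrD !natrM !natrD => <-; ring.
Qed.

Lemma lin_le_true_vars b M : induced_matching M ->
  lin (edge_weight b) (indicator M)
    <= lin (edge_weight b) (indicator (matching_of (true_vars M))).
Proof.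
move=> iM; apply: ler_sum => A _; rewrite /indicator.
case: (boolP (A \in M)) => AM; last first.
  by rewrite mulr0; case: ifP; rewrite ?mulr1 ?mulr0 ?edge_weight_ge0.
case: (boolP (A \in matching_of _)) => // nA; rewrite mulr1 mulr0.
rewrite /edge_weight; case: pickP => // x /eqP vA.
rewrite /lit_weight; case: (boolP (compatible x x)) => cx //.
have agx := agrees_true_vars iM AM vA cx.
have eA : A = lit_edge x by apply: val_inj.
by case/negP: nA; rewrite eA (agrees_lit_ofE agx); apply: imset_f.
Qed.

Lemma polytope_lin_le_rhs b x :
  induced_matching_polytope x -> lin (edge_weight b) x <= rhs b.
Proof.
apply: in_conv_lin_le => M iM; apply: le_trans (lin_le_true_vars b iM) _.
by rewrite -subr_ge0 rhs_sub_lin_matching_of sqr_ge0.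
Qed.

End UniqueDisjointness.

(** * Extension complexity *)

Section UniqueDisjointnessBound.
Variables (R : realFieldType) (D : finType) (Q : (D -> R) -> Prop) (n : nat).
Variables (X ineq : {set 'I_n} -> D -> R) (beta : {set 'I_n} -> R).
Implicit Types a b : {set 'I_n}.
Hypothesis QX : forall a, Q (X a).
Hypothesis ineq_valid : forall b x, Q x -> lin (ineq b) x <= beta b.
Hypothesis ineq_tight : forall a b, #|a :&: b| = 1%N -> lin (ineq b) (X a) = beta b.
Hypothesis ineq_slack : forall a b, [disjoint a & b] -> lin (ineq b) (X a) < beta b.

Lemma xc_ge_unique_disjointness : xc_ge Q (3 ^ n %/ 2 ^ n)%N.
Proof.
move=> k m p proj L QE facetL.
have /fin_all_exists[y yP] a : exists y, in_conv predT p y /\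
    forall d, X a d = \sum_j proj d j * y j by apply/QE.
pose pull b j := \sum_d ineq b d * proj d j.
have lin_pull b x : lin (pull b) x = lin (ineq b) (fun d => \sum_j proj d j * x j).
  rewrite /lin /pull; under eq_bigr => j _ do rewrite mulr_suml.
  rewrite exchange_big /=; apply: eq_bigr => d _; rewrite mulr_sumr.
  by apply: eq_bigr => j _; rewrite mulrA.
have lin_pull_y a b : lin (pull b) (y a) = lin (ineq b) (X a).
  by rewrite lin_pull /lin; apply: eq_bigr => d _; case: (yP a) => _ ->.
pose G b x := in_conv predT p x /\ lin (pull b) x = beta b.
have sep a b : exists r, [disjoint a & b] -> [/\ (r < size L)%N,
    ~ nth (fun _ => False) L r (y a) & forall x, G b x -> nth (fun _ => False) L r x].
  case: (boolP [disjoint a & b]) => [dab|_]; last by exists 0%N.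
  have [|||F [facetF GF nFy]] := @face_avoiding_facet _ _ _ p (G b) (y a).
  - exists (pull b), (beta b); split => // x cx.
    by rewrite lin_pull; apply: ineq_valid; apply/QE; exists x.
  - by case: (yP a).
  - by case=> _; rewrite lin_pull_y => eq_beta; move: (ineq_slack dab); rewrite eq_beta ltxx.
  have [r [rL Fr]] := facetL F facetF.
  by exists r => _; split=> // [/Fr|x /GF/Fr].
have /fin_all_exists[rho rhoP] (ab : {set 'I_n} * {set 'I_n}) :
    exists r, [disjoint ab.1 & ab.2] -> _ := sep ab.1 ab.2.
have cover := @disj_pairs_cover_le _ (size L) (fun a b => rho (a, b)).
rewrite card_ord in cover; rewrite -(mulnK (size L) (expn_gt0 2 n)) leq_div2r //.
apply: cover => [a b /(rhoP (a, b))[]//|a b' a' b ab' a'b rho_eq].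
apply/eqP => meet1.
have [_ nLy _] := rhoP (a, b') ab'; have [_ _ GL] := rhoP (a', b) a'b.
apply: nLy; rewrite /= rho_eq; apply: GL; split; first by case: (yP a).
by rewrite lin_pull_y ineq_tight.
Qed.

End UniqueDisjointnessBound.

Lemma xc_ge_cgraph (R : realFieldType) (m : nat) :
  xc_ge (@induced_matching_polytope R _ (@cgraph m)) (3 ^ m %/ 2 ^ m)%N.
Proof.
apply: (xc_ge_unique_disjointness (X := fun a => indicator R (matching_of a))
          (ineq := @edge_weight R _) (beta := @rhs R _)).
- by move=> a; apply: indicator_in_polytope; apply: induced_matching_of.
- by move=> b x; apply: polytope_lin_le_rhs.
- move=> a b meet1 /=; apply/eqP; rewrite eq_sym -subr_eq0 rhs_sub_lin_matching_of meet1.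
  by rewrite subrr expr0n.
- move=> a b dab /=; rewrite -subr_gt0 rhs_sub_lin_matching_of (disjoint_setI0 dab).
  by rewrite cards0 sub0r sqrrN expr1n ltr01.
Qed.

Lemma xc_ge_le (R : realFieldType) (D : finType) (Q : (D -> R) -> Prop) (N N' : nat) :
  xc_ge Q N -> (N' <= N)%N -> xc_ge Q N'.
Proof. by move=> xcN N'N k m p c L QE /(xcN k m p c L QE); exact: leq_trans N'N. Qed.

Lemma exp2_le_div_exp32 K : (2 ^ K <= 3 ^ (2 * K) %/ 2 ^ (2 * K))%N.
Proof.
rewrite leq_divRL ?expn_gt0 // !expnM -expnMn.
by case: K => // K; rewrite leq_exp2r.
Qed.

Lemma exists_max_quartic_le (n : nat) :
  exists K, (1024 * K ^ 4 <= n)%N /\ forall k, (1024 * k ^ 4 <= n)%N -> (k <= K)%N.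
Proof.
have bnd k : (1024 * k ^ 4 <= n)%N -> (k <= n)%N.
  by move=> kn; apply: leq_trans kn; case: k => // k; nia.
have ex0 : exists k, (1024 * k ^ 4 <= n)%N by exists 0%N.
by case: (ex_maxnP ex0 bnd) => K ? ?; exists K.
Qed.

Theorem theorem3 (R : realFieldType) :
  exists (C : nat) (c : R) (n0 : nat), 0 < c /\
    forall n : nat, (n0 <= n)%N ->
      exists (N : nat) (e : rel 'I_N),
        [/\ symmetric e, irreflexive e & bipartite e] /\
        [/\ (N <= C * n)%N, (#|{: edge_t e}| <= C * n)%N &
            forall k : nat, (k%:R : R) ^+ 4 <= c * n%:R ->
              xc_ge (@induced_matching_polytope R _ e) (2 ^ k)%N].
Proof.
exists 1%N, 1024%:R^-1, 0%N; split; first by rewrite invr_gt0 ltr0n.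
move=> n _; have [K [Kn Kmax]] := exists_max_quartic_le n.
exists (nverts (2 * K)%N), (@cgraph (2 * K)%N); split.
  by split; [apply: cgraph_sym|apply: cgraph_irr|apply: cgraph_bipartite].
have nvertsK : (nverts (2 * K) * nverts (2 * K) <= n)%N.
  by apply: leq_trans Kn; rewrite card_cgraph; nia.
split.
- by rewrite mul1n; apply: leq_trans nvertsK; rewrite card_cgraph; nia.
- by rewrite mul1n; apply: leq_trans (card_edges_cgraph _) nvertsK.
move=> k; rewrite mulrC ler_pdivlMr ?ltr0n // -natrX -natrM ler_nat mulnC => /Kmax kK.
apply: xc_ge_le (@xc_ge_cgraph R (2 * K)%N) _.
exact: leq_trans (leq_pexp2l _ kK) (exp2_le_div_exp32 K).
Qed.
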